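(* Let $M=(I,O,T,t_0,\tau,\mathit{out})$ be a Moore system and let $A=(2^{I\cup O},Q,q_0,\delta,\mathit{acc})$ be a nondeterministic word automaton with transition relation $\delta\subseteq Q\times 2^{I\cup O}\times Q$. Let $D$ be a totally ordered set, let $\triangleright\subseteq Q\times D\times D$ be a rank comparison relation (write $d\triangleright_q d'$ for $(q,d,d')\in\triangleright$), and let $\rho:Q\times T\to D$ be a ranking function. Define the formula, with a free function symbol $\mathit{rch}:Q\times T\to\{\mathit{true},\mathit{false}\}$, $$\Phi^{GR}_{\mathsf E}(M,A)=\mathit{rch}(q_0,t_0)\wedge\bigwedge_{(q,t)\in Q\times T}\Big[\mathit{rch}(q,t)\rightarrow\bigvee_{(q,\,i\cup o,\,q')\in\delta}\big(\mathit{out}(t)=o\wedge \mathit{rch}(q',\tau(t,i))\wedge \rho(q,t)\triangleright_q\rho(q',\tau(t,i))\big)\Big],$$ where $i\in 2^I$, $o\in 2^O$. Then $\Phi^{GR}_{\mathsf E}(M,A)$ is satisfiable using $\rho$ and $D$ (i.e., there is an interpretation of $\mathit{rch}$ making it true for the given $\rho$) if and only if the product $M\otimes A_{\mathsf E}$ has an infinite path $(q_1,t_1)(q_2,t_2)\dots$ that satisfies $\triangleright$ using $\rho$ and $D$, i.e., $\rho(q_j,t_j)\triangleright_{q_j}\rho(q_{j+1},t_{j+1})$ for every $j\ge 1$.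
   Context: A Moore system $M=(I,O,T,t_0,\tau,\mathit{out})$ has disjoint finite sets of inputs $I$ and outputs $O$, finite state set $T$, initial state $t_0$, total transition function $\tau:T\times 2^I\to T$ and output labelling $\mathit{out}:T\to 2^O$. The product $M\otimes A_{\mathsf E}$ is the graph with vertices $Q\times T$, initial vertex $(q_0,t_0)$, and an edge from $(q,t)$ to $(q',\tau(t,i))$ whenever $(q,i\cup o,q')\in\delta$ with $o=\mathit{out}(t)$ and $i\in 2^I$; paths of the product start at the initial vertex $(q_0,t_0)$. *)

From mathcomp Require Import all_boot all_order.
Set Implicit Arguments. Unset Strict Implicit. Unset Printing Implicit Defensive.

(* Atomic propositions AP (a finite type); inputs I and outputs O are
   disjoint subsets of AP. Letters of 2^(I u O) are sets {set AP}.
   Moore system: finite states T, initial t0, transition tau (applied to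
   inputs i \subset I), output labelling out (with out t \subset O).
   Automaton: finite states Q, initial q0, transition relation delta
   (delta q a q' = true iff (q,a,q') in delta). *)

Definition PhiGR_E (AP Q T : finType) (D : Type) (I O : {set AP})
  (t0 : T) (tau : T -> {set AP} -> T) (out : T -> {set AP})
  (q0 : Q) (delta : Q -> {set AP} -> Q -> bool)
  (rank_rel : Q -> D -> D -> bool) (rho : Q -> T -> D)
  (rch : Q -> T -> bool) : Prop :=
  rch q0 t0 /\
  forall (q : Q) (t : T), rch q t ->
    exists (i o : {set AP}) (q' : Q),
      [/\ i \subset I, o \subset O, delta q (i :|: o) q' & out t = o] /\
      rch q' (tau t i) /\ rank_rel q (rho q t) (rho q' (tau t i)).

Definition prod_edge (AP Q T : finType) (I : {set AP})
  (tau : T -> {set AP} -> T) (out : T -> {set AP})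
  (delta : Q -> {set AP} -> Q -> bool) (v w : Q * T) : Prop :=
  exists i : {set AP}, [/\ i \subset I, delta v.1 (i :|: out v.2) w.1 & w.2 = tau v.2 i].

Definition has_ranked_path (AP Q T : finType) (D : Type) (I : {set AP})
  (t0 : T) (tau : T -> {set AP} -> T) (out : T -> {set AP})
  (q0 : Q) (delta : Q -> {set AP} -> Q -> bool)
  (rank_rel : Q -> D -> D -> bool) (rho : Q -> T -> D) : Prop :=
  exists p : nat -> Q * T,
    p 0 = (q0, t0) /\
    forall j : nat,
      prod_edge I tau out delta (p j) (p j.+1) /\
      rank_rel (p j).1 (rho (p j).1 (p j).2) (rho (p j.+1).1 (p j.+1).2).

From mathcomp Require Import all_boot all_order.
From Stdlib Require Import ClassicalEpsilon.
Set Implicit Arguments. Unset Strict Implicit. Unset Printing Implicit Defensive.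

(* An interpretation of rch satisfying the formula is exactly a set of product
   vertices containing (q0, t0) in which every vertex has a successor along an
   edge respecting the rank relation.  Such a set yields an infinite path by
   dependent choice, and conversely the vertices of an infinite path form such
   a set. *)

Section SuccessorClosedSets.

Variables (V : Type) (e : V -> V -> Prop).

Definition succ_closed (R : pred V) : Prop :=
  forall v, R v -> exists2 w, R w & e v w.

Definition infinite_path_from (v0 : V) (p : nat -> V) : Prop :=
  p 0 = v0 /\ forall j, e (p j) (p j.+1).

Lemma succ_closed_path (R : pred V) (v0 : V) :
  R v0 -> succ_closed R -> exists p, infinite_path_from v0 p.
Proof.
move=> Rv0 closedR.
have succ (x : {v | R v}) : {y : {v | R v} | e (sval x) (sval y)}.
  apply: constructive_indefinite_description.
  case: x => v Rv; have [w Rw evw] := closedR v Rv.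
  by exists (exist _ w Rw).
exists (fun n => sval (iter n (fun x => sval (succ x)) (exist _ v0 Rv0))).
by split=> // j; apply: (svalP (succ _)).
Qed.

Definition visited (p : nat -> V) : pred V :=
  fun v => if excluded_middle_informative (exists j, p j = v) then true else false.

Lemma visitedP (p : nat -> V) (v : V) : visited p v <-> exists j, p j = v.
Proof. by rewrite /visited; case: excluded_middle_informative. Qed.

Lemma visited_succ_closed (p : nat -> V) :
  (forall j, e (p j) (p j.+1)) -> succ_closed (visited p).
Proof.
move=> path_p v /visitedP [j <-].
by exists (p j.+1); [apply/visitedP; exists j.+1 | apply: path_p].
Qed.

Lemma succ_closedP (v0 : V) :
  (exists2 R : pred V, R v0 & succ_closed R) <-> exists p, infinite_path_from v0 p.
Proof.
split=> [[R Rv0 closedR] | [p [p0 path_p]]]; first exact: succ_closed_path Rv0 closedR.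
exists (visited p); last exact: visited_succ_closed.
by apply/visitedP; exists 0.
Qed.

End SuccessorClosedSets.

Section RankedProduct.

Variables (AP Q T : finType) (D : Type) (I O : {set AP}).
Variables (t0 : T) (tau : T -> {set AP} -> T) (out : T -> {set AP}).
Variables (q0 : Q) (delta : Q -> {set AP} -> Q -> bool).
Variables (rank_rel : Q -> D -> D -> bool) (rho : Q -> T -> D).
Hypothesis out_sub : forall t, out t \subset O.

Definition ranked_edge (v w : Q * T) : Prop :=
  prod_edge I tau out delta v w /\ rank_rel v.1 (rho v.1 v.2) (rho w.1 w.2).

Lemma PhiGR_E_succ_closed (rch : Q -> T -> bool) :
  PhiGR_E I O t0 tau out q0 delta rank_rel rho rch <->
  rch q0 t0 /\ succ_closed ranked_edge (fun v => rch v.1 v.2).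
Proof.
split=> [[rch0 rch_succ] | [rch0 closed_rch]]; split=> //.
- move=> [q t] /= rch_qt.
  have [i [o [q' [[sub_i _ d_q out_o] [rch' rank']]]]] := rch_succ q t rch_qt.
  rewrite -out_o in d_q.
  by exists (q', tau t i) => //; split=> //; exists i.
- move=> q t rch_qt.
  have [[q' t'] /= rch' [[i [sub_i d_q /= t'E]] rank']] := closed_rch (q, t) rch_qt.
  subst t'.
  by exists i, (out t), q'.
Qed.

End RankedProduct.

Theorem mainTheorem1
  (AP : finType) (I O : {set AP}) (HIO : [disjoint I & O])
  (T : finType) (t0 : T) (tau : T -> {set AP} -> T) (out : T -> {set AP})
  (Hout : forall t, out t \subset O)
  (Q : finType) (q0 : Q) (delta : Q -> {set AP} -> Q -> bool)
  (disp : Order.disp_t) (D : orderType disp)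
  (rank_rel : Q -> D -> D -> bool) (rho : Q -> T -> D) :
  (exists rch : Q -> T -> bool,
      PhiGR_E I O t0 tau out q0 delta rank_rel rho rch) <->
  has_ranked_path I t0 tau out q0 delta rank_rel rho.
Proof.
have PhiE := PhiGR_E_succ_closed I t0 tau q0 delta rank_rel rho Hout.
rewrite /has_ranked_path -(succ_closedP (ranked_edge I tau out delta rank_rel rho)).
split=> [[rch /PhiE [rch0 closed_rch]] | [R R0 closedR]].
  by exists (fun v => rch v.1 v.2).
exists (fun q t => R (q, t)); apply/PhiE; split=> // -[q t] /closedR [[q' t'] Rw edge].
by exists (q', t').
Qed.
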